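(* Let $r\ge 2$ be an integer and $0\le x<\pi$ real. Then $$\int_0^x \theta^{r-2}\log\left(\cos\frac\theta2\right)d\theta=\frac{x^{r-1}}{r-1}\log\left(\cos\frac x2\right)-\frac{(2\pi)^{r-1}}{r-1}\log\mathcal C_r\left(\frac x{2\pi}\right).$$
   Context: For an integer $r\ge2$ let $P_r(y)=(1-y)\exp\left(y+\frac{y^2}{2}+\cdots+\frac{y^r}{r}\right)$. The multiple cosine function of Kurokawa–Koyama of order $r\ge2$ is $\mathcal C_r(x)=\prod_{n\ge1,\ n\text{ odd}}\left\{P_r\left(\frac{x}{n/2}\right)P_r\left(-\frac{x}{n/2}\right)^{(-1)^{r-1}}\right\}^{(n/2)^{r-1}}$, interpreted as $\mathcal C_r(x)=\exp\Big(\sum_{n\ge1,\,n\text{ odd}}(n/2)^{r-1}\big[\operatorname{Log}P_r(2x/n)+(-1)^{r-1}\operatorname{Log}P_r(-2x/n)\big]\Big)$, where $\operatorname{Log}P_r(y):=\operatorname{Log}(1-y)+y+\frac{y^2}{2}+\cdots+\frac{y^r}{r}$ with $\operatorname{Log}$ the principal branch. The series converges and defines a holomorphic function on $D=\mathbb C\setminus\big((-\infty,-\tfrac12]\cup[\tfrac12,\infty)\big)$, positive on $(-\tfrac12,\tfrac12)$; $\log\mathcal C_r(x)$ denotes the exponent above (the real logarithm for real $|x|<\tfrac12$). *)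

From Stdlib Require Import Reals.
From Coquelicot Require Import Coquelicot.
Open Scope R_scope.

(* Log P_r(y) = Log(1-y) + y + y^2/2 + ... + y^r/r.
   Only used for real |y| < 1, where the principal Log is the real ln. *)
Definition LogP (r : nat) (y : R) : R :=
  ln (1 - y) + sum_n_m (fun k => y ^ k / INR k) 1 r.

(* log C_r(x) = sum over odd n >= 1 of (n/2)^(r-1) [Log P_r(2x/n) + (-1)^(r-1) Log P_r(-2x/n)],
   with odd n written as n = 2m+1, m >= 0.  Used for real |x| < 1/2. *)
Definition logC (r : nat) (x : R) : R :=
  Series (fun m : nat =>
    let n := INR (2 * m + 1) in
    (n / 2) ^ (r - 1) *
      (LogP r (2 * x / n) + (-1) ^ (r - 1) * LogP r (- (2 * x) / n))).

(* Expand ln cos(t/2) = sum over odd n of ln (1 - t^2/(n PI)^2).  Against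
   t^(r-2), the n-th term has an explicit primitive built from LogP, and its value at x is
   the n-th summand of log C_r(x/(2 PI)) up to the boundary term x^(r-1)/(r-1) ln(...).
   The expansion, with the uniform rate 1/k needed to exchange sum and integral, comes
   from the finite product identity
     prod_(j<=k) (1 - x^2/(2j+1)^2) * W_(2k+1)(x) = cos(x PI/2) * W_(2k+1)(0),
   W_n(x) = int_0^(PI/2) cos(x s) cos(s)^n ds, where W_(2k+1)(0)/W_(2k+1)(x) = 1 + O(1/k). *)

From Stdlib Require Import Reals Lra Lia.
From Coquelicot Require Import Coquelicot.
Open Scope R_scope.
Set Bullet Behavior "Strict Subproofs".

Lemma ex_RInt_of_derivable (f : R -> R) (a b : R) :
  (forall z, Rmin a b <= z <= Rmax a b -> ex_derive f z) -> ex_RInt f a b.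
Proof.
  intros Hf. apply (@ex_RInt_continuous R_CompleteNormedModule).
  intros z Hz. apply (@ex_derive_continuous R_AbsRing R_NormedModule), Hf, Hz.
Qed.

Lemma is_RInt_derive_on (F f : R -> R) (a b : R) :
  (forall t, Rmin a b <= t <= Rmax a b -> is_derive F t (f t)) ->
  (forall t, ex_derive f t) -> RInt f a b = F b - F a.
Proof.
  intros HF Hf. apply is_RInt_unique, (@is_RInt_derive R_CompleteNormedModule); auto.
  intros t _. apply (@ex_derive_continuous R_AbsRing R_NormedModule), Hf.
Qed.

Lemma RInt_lincomb (f g : R -> R) (a b u v : R) :
  ex_RInt f a b -> ex_RInt g a b ->
  RInt (fun s => u * f s + v * g s) a b = u * RInt f a b + v * RInt g a b.
Proof.
  intros Hf Hg.
  rewrite (RInt_plus (fun s => u * f s) (fun s => v * g s));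
    [| exact (ex_RInt_scal f a b u Hf) | exact (ex_RInt_scal g a b v Hg)].
  exact (f_equal2 Rplus (RInt_scal f a b u Hf) (RInt_scal g a b v Hg)).
Qed.

Lemma is_RInt_sum_n (f : nat -> R -> R) (I : nat -> R) (a b : R) (k : nat) :
  (forall j, is_RInt (f j) a b (I j)) ->
  is_RInt (fun t => sum_n (fun j => f j t) k) a b (sum_n I k).
Proof.
  intros Hf. induction k as [|k IH].
  - rewrite sum_O. apply (is_RInt_ext (f 0%nat)); [intros; now rewrite sum_O | apply Hf].
  - rewrite sum_Sn. apply (is_RInt_ext (fun t => plus (sum_n (fun j => f j t) k) (f (S k) t))).
    + intros t _. now rewrite sum_Sn.
    + apply (@is_RInt_plus R_NormedModule); auto.
Qed.

Lemma is_lim_seq_inv_S : is_lim_seq (fun k => / INR (S k)) 0.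
Proof.
  apply (is_lim_seq_incr_1 (fun k => / INR k)).
  apply (is_lim_seq_inv _ p_infty); [apply is_lim_seq_INR | discriminate].
Qed.

Lemma is_lim_seq_squeeze_inv (u : nat -> R) (l C : R) :
  (forall k, l <= u (S k) <= l + C / INR (S k)) -> is_lim_seq u l.
Proof.
  intros Hu. apply is_lim_seq_incr_1.
  apply (is_lim_seq_le_le (fun _ => l) _ (fun k => l + C / INR (S k))); [exact Hu | apply is_lim_seq_const |].
  assert (H0 : is_lim_seq (fun k => l + C * / INR (S k)) (l + C * 0)).
  { apply is_lim_seq_plus'; [apply is_lim_seq_const |].
    apply (is_lim_seq_scal_l _ C 0), is_lim_seq_inv_S. }
  now rewrite Rmult_0_r, Rplus_0_r in H0.
Qed.

Lemma is_lim_seq_RInt_squeeze (f h : R -> R) (g : nat -> R -> R) (a b : R) :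
  a <= b -> ex_RInt f a b -> ex_RInt h a b -> (forall k, ex_RInt (g k) a b) ->
  (forall k t, a <= t <= b -> f t <= g (S k) t <= f t + h t / INR (S k)) ->
  is_lim_seq (fun k => RInt (g k) a b) (RInt f a b).
Proof.
  intros Hab Hf Hh Hg Hfg. apply (is_lim_seq_squeeze_inv _ _ (RInt h a b)). intros k.
  assert (Hup : is_RInt (fun t => f t + h t / INR (S k)) a b (RInt f a b + RInt h a b / INR (S k))).
  { apply (is_RInt_ext (fun t => plus (f t) (scal (/ INR (S k)) (h t)))).
    - intros t _. unfold plus, scal; simpl. unfold mult; simpl. lra.
    - replace (RInt f a b + RInt h a b / INR (S k))
        with (plus (RInt f a b) (scal (/ INR (S k)) (RInt h a b)))
        by (unfold plus, scal; simpl; unfold mult; simpl; lra).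
      apply (@is_RInt_plus R_NormedModule); [| apply (@is_RInt_scal R_NormedModule)];
        apply (@RInt_correct R_CompleteNormedModule); assumption. }
  split.
  - apply RInt_le; auto. intros t Ht. apply Hfg. lra.
  - rewrite <- (is_RInt_unique _ _ _ _ Hup). apply RInt_le; auto.
    + eexists; exact Hup.
    + intros t Ht. apply Hfg. lra.
Qed.

Lemma INR_odd (k : nat) : INR (2 * k + 1) = 2 * INR k + 1.
Proof. rewrite plus_INR, mult_INR. simpl. ring. Qed.

Lemma pow_neg1_cases (n : nat) : (-1) ^ n = 1 \/ (-1) ^ n = -1.
Proof.
  induction n as [|n [IH | IH]]; simpl; [left | right | left]; rewrite ?IH; ring.
Qed.

Lemma eq_of_sub_pythagoras (A B k s : R) :
  A - B = k * (sin s ^ 2 + cos s ^ 2 - 1) -> A = B.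
Proof. intros H. rewrite <- !Rsqr_pow2, sin2_cos2 in H. lra. Qed.

Lemma ln_le_sub_1 (y : R) : 0 < y -> ln y <= y - 1.
Proof. intros Hy. pose proof (exp_ineq1_le (ln y)) as H. rewrite exp_ln in H; lra. Qed.

Lemma div_sub_one_le (W0 W1 t : R) :
  0 < W1 -> 0 < t <= 1 -> W0 - W1 <= W0 * t / 4 -> W0 / W1 - 1 <= t.
Proof.
  intros HW1 Ht Hgap. set (y := W0 / W1).
  assert (HW0 : W0 = y * W1) by (unfold y; field; lra).
  rewrite HW0 in Hgap.
  assert (Hy : y - 1 <= y * t / 4).
  { apply (Rmult_le_reg_r W1); [exact HW1 |]. unfold Rdiv. nra. }
  nra.
Qed.

Lemma one_sub_cos_le (u : R) : - PI / 2 <= u <= PI / 2 -> 1 - cos u <= u ^ 2 / 2.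
Proof.
  intros Hu. destruct (cos_bound u 0 ltac:(lra) ltac:(lra)) as [H _].
  unfold cos_approx, cos_term in H. simpl in H. lra.
Qed.

Lemma mul_cos_le_sin (s : R) : 0 <= s <= PI / 2 -> s * cos s <= sin s.
Proof.
  intros Hs. pose proof PI_RGT_0.
  assert (E : RInt (fun u => u * sin u) 0 s = (sin s - s * cos s) - (sin 0 - 0 * cos 0)).
  { apply (is_RInt_derive_on (fun u => sin u - u * cos u)).
    - intros u _. auto_derive; [auto | ring].
    - intros u. auto_derive. auto. }
  assert (0 <= RInt (fun u => u * sin u) 0 s).
  { apply RInt_ge_0; [lra | apply ex_RInt_of_derivable; intros; auto_derive; auto |].
    intros u Hu. apply Rmult_le_pos; [| apply sin_ge_0]; lra. }
  rewrite sin_0 in E. lra.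
Qed.

(** * A primitive of t^p ln (1 - (t/a)^2) *)

Lemma LogP_S (r : nat) (u : R) : LogP (S r) u = LogP r u + u ^ S r / INR (S r).
Proof. unfold LogP. rewrite sum_n_Sm by lia. unfold plus; simpl. ring. Qed.

Lemma LogP_0 (r : nat) : LogP r 0 = 0.
Proof.
  induction r as [|r IH].
  - unfold LogP. rewrite sum_n_m_zero by lia. rewrite Rminus_0_r, ln_1. unfold zero; simpl. ring.
  - rewrite LogP_S, IH, pow_i by lia. unfold Rdiv. ring.
Qed.

Lemma is_derive_LogP (r : nat) (u : R) : u < 1 -> is_derive (LogP r) u (- u ^ r / (1 - u)).
Proof.
  intros Hu. induction r as [|r IH].
  - apply (is_derive_ext (fun v => ln (1 - v))).
    + intros v. unfold LogP. rewrite sum_n_m_zero by lia. unfold zero; simpl. ring.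
    + auto_derive; [lra | simpl; field; lra].
  - apply (is_derive_ext (fun v => LogP r v + v ^ S r / INR (S r))).
    + intros v. now rewrite LogP_S.
    + replace (- u ^ S r / (1 - u)) with (- u ^ r / (1 - u) + INR (S r) * u ^ r / INR (S r)).
      * apply (@is_derive_plus R_AbsRing R_NormedModule); [exact IH|]. auto_derive; auto.
        change (match r with 0%nat => 1 | S _ => INR r + 1 end) with (INR (S r)). unfold Rdiv. ring.
      * rewrite <- tech_pow_Rmult. field. split; [lra | apply not_0_INR; lia].
Qed.

(* Differentiating LogP leaves - u^r / (1 - u); the two LogP terms cancel the rational
   part of the derivative of u^(p+1) ln (1 - u^2). *)
Definition ln_sq_prim (p : nat) (u : R) : R :=
  (u ^ S p * ln (1 - u ^ 2)
   - (LogP (S (S p)) u + (-1) ^ S p * LogP (S (S p)) (- u))) / INR (S p).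

Lemma is_derive_ln_sq_prim (p : nat) (u : R) :
  -1 < u < 1 -> is_derive (ln_sq_prim p) u (u ^ p * ln (1 - u ^ 2)).
Proof.
  intros Hu. unfold ln_sq_prim. auto_derive.
  - repeat split; [nra | eexists; apply is_derive_LogP; lra ..].
  - change (match p with 0%nat => 1 | S _ => INR p + 1 end) with (INR (S p)).
    replace (Derive (fun v : R => LogP (S (S p)) v) u) with (- u ^ S (S p) / (1 - u))
      by (symmetry; apply is_derive_unique, is_derive_LogP; lra).
    replace (Derive (fun v : R => LogP (S (S p)) v) (- u)) with (- (- u) ^ S (S p) / (1 - - u))
      by (symmetry; apply is_derive_unique, is_derive_LogP; lra).
    assert (INR (S p) <> 0) by (apply not_0_INR; lia).
    rewrite <- !tech_pow_Rmult.
    replace (- u) with (-1 * u) by ring. rewrite Rpow_mult_distr.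
    replace (1 - u * (u * u ^ 0)) with (1 + - (u * (u * 1))) by ring.
    destruct (pow_neg1_cases p) as [-> | ->]; field; repeat split; nra.
Qed.

Lemma ln_sq_prim_0 (p : nat) : ln_sq_prim p 0 = 0.
Proof.
  unfold ln_sq_prim. rewrite Ropp_0, LogP_0, pow_i by lia. unfold Rdiv. ring.
Qed.

Lemma is_RInt_pow_ln_sq (p : nat) (a X : R) :
  0 < a -> 0 <= X < a ->
  is_RInt (fun t => t ^ p * ln (1 - (t / a) ^ 2)) 0 X (a ^ S p * ln_sq_prim p (X / a)).
Proof.
  intros Ha HX.
  assert (Hin : forall t, Rmin 0 X <= t <= Rmax 0 X -> -1 < t / a < 1).
  { intros t Ht. rewrite Rmin_left, Rmax_right in Ht by lra.
    split.
    - apply (Rlt_le_trans _ 0); [lra | apply Rdiv_le_0_compat; lra].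
    - apply Rlt_div_l; lra. }
  replace (a ^ S p * ln_sq_prim p (X / a))
    with (minus (a ^ S p * ln_sq_prim p (X / a)) (a ^ S p * ln_sq_prim p (0 / a)))
    by (unfold Rdiv at 2; rewrite Rmult_0_l, ln_sq_prim_0; unfold minus, plus, opp; simpl; ring).
  apply (@is_RInt_derive R_CompleteNormedModule (fun t => a ^ S p * ln_sq_prim p (t / a))).
  - intros t Ht. specialize (Hin t Ht).
    assert (Hlin : is_derive (fun v => v / a) t (/ a)) by (auto_derive; [lra | ring]).
    pose proof (is_derive_scal _ t (a ^ S p) _
      (is_derive_comp (ln_sq_prim p) _ t _ _ (is_derive_ln_sq_prim p _ Hin) Hlin)) as Hd.
    replace (t ^ p * ln (1 - (t / a) ^ 2))
      with (a ^ S p * scal (/ a) ((t / a) ^ p * ln (1 - (t / a) ^ 2))); [exact Hd |].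
    unfold scal; simpl; unfold mult; simpl.
    unfold Rdiv. rewrite Rpow_mult_distr, pow_inv. field.
    split; [apply pow_nonzero |]; lra.
  - intros t Ht. specialize (Hin t Ht).
    apply (@ex_derive_continuous R_AbsRing R_NormedModule). auto_derive. nra.
Qed.

(** * Wallis-type integrals and the product formula for cosine *)

Definition wallis_cos (n : nat) (x : R) : R :=
  RInt (fun s => cos (x * s) * cos s ^ n) 0 (PI / 2).

Lemma ex_RInt_wallis_cos (n : nat) (x : R) :
  ex_RInt (fun s => cos (x * s) * cos s ^ n) 0 (PI / 2).
Proof. apply ex_RInt_of_derivable. intros z _. auto_derive. auto. Qed.

(* Integration by parts twice: F' is the integrand of HF, modulo sin^2 + cos^2 = 1. *)
Lemma wallis_cos_rec (n : nat) (x : R) :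
  ((INR n + 2) ^ 2 - x ^ 2) * wallis_cos (S (S n)) x
  = (INR n + 2) * (INR n + 1) * wallis_cos n x.
Proof.
  set (F := fun s => x * sin (x * s) * cos s ^ S (S n)
                     - (INR n + 2) * cos (x * s) * cos s ^ S n * sin s).
  assert (HF : RInt (fun s => (x ^ 2 - (INR n + 2) ^ 2) * (cos (x * s) * cos s ^ S (S n))
                              + (INR n + 2) * (INR n + 1) * (cos (x * s) * cos s ^ n)) 0 (PI / 2)
               = F (PI / 2) - F 0).
  { apply is_RInt_derive_on.
    - intros s _. unfold F. auto_derive; [auto |].
      apply (eq_of_sub_pythagoras _ _ ((INR n + 2) * (INR n + 1) * cos (x * s) * cos s ^ n) s).
      change (match n with 0%nat => 1 | S _ => INR n + 1 end) with (INR (S n)).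
      rewrite S_INR. simpl. ring.
    - intros s. auto_derive. auto. }
  assert (HF0 : F (PI / 2) - F 0 = 0).
  { unfold F. rewrite cos_PI2, Rmult_0_r, sin_0. simpl. ring. }
  rewrite HF0, RInt_lincomb in HF by apply ex_RInt_wallis_cos.
  unfold wallis_cos. lra.
Qed.

Lemma wallis_cos_1 (x : R) : (1 - x ^ 2) * wallis_cos 1 x = cos (x * (PI / 2)).
Proof.
  set (F := fun s => x * sin (x * s) * cos s - cos (x * s) * sin s).
  assert (HF : RInt (fun s => (x ^ 2 - 1) * (cos (x * s) * cos s ^ 1)) 0 (PI / 2)
               = F (PI / 2) - F 0).
  { apply is_RInt_derive_on.
    - intros s _. unfold F. auto_derive; [auto | ring].
    - intros s. auto_derive. auto. }
  rewrite (RInt_scal (fun s => cos (x * s) * cos s ^ 1)) in HF by apply ex_RInt_wallis_cos.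
  unfold F, scal in HF; simpl in HF; unfold mult in HF; simpl in HF.
  rewrite cos_PI2, sin_PI2, !Rmult_0_r, sin_0 in HF.
  unfold wallis_cos. simpl. lra.
Qed.

Lemma wallis_cos_1_0 : wallis_cos 1 0 = 1.
Proof. pose proof (wallis_cos_1 0) as H. rewrite Rmult_0_l, cos_0 in H. lra. Qed.

Lemma wallis_cos_le_0 (n : nat) (x : R) : wallis_cos n x <= wallis_cos n 0.
Proof.
  pose proof PI_RGT_0. apply RInt_le; try apply ex_RInt_wallis_cos; [lra |].
  intros s Hs. rewrite Rmult_0_l, cos_0.
  assert (0 <= cos s ^ n) by (apply pow_le, cos_ge_0; lra).
  pose proof (COS_bound (x * s)). nra.
Qed.

Lemma wallis_cos_0_sub (n : nat) :
  wallis_cos n 0 - wallis_cos (S (S n)) 0 = wallis_cos (S (S n)) 0 / (INR n + 1).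
Proof.
  pose proof (wallis_cos_rec n 0) as R0. pose proof (pos_INR n).
  apply (Rmult_eq_reg_l ((INR n + 2) * (INR n + 1))); [| nra].
  field_simplify; [nra | lra].
Qed.

Lemma wallis_cos_odd_pos_0 (k : nat) : 0 < wallis_cos (2 * k + 1) 0.
Proof.
  induction k as [|k IH]; [change (0 < wallis_cos 1 0); rewrite wallis_cos_1_0; lra |].
  replace (2 * S k + 1)%nat with (S (S (2 * k + 1))) by lia.
  pose proof (wallis_cos_rec (2 * k + 1) 0) as R0. pose proof (pos_INR (2 * k + 1)).
  assert (0 < (INR (2 * k + 1) + 2) ^ 2 - 0 ^ 2) by nra.
  assert (0 < (INR (2 * k + 1) + 2) * (INR (2 * k + 1) + 1) * wallis_cos (2 * k + 1) 0)
    by (apply Rmult_lt_0_compat; [nra | exact IH]).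
  nra.
Qed.

Lemma wallis_cos_gap_integrand (n : nat) (x s : R) :
  0 <= x <= 1 -> 0 <= s <= PI / 2 ->
  cos s ^ S (S n) * (1 - cos (x * s)) <= x ^ 2 / 2 * (cos s ^ n - cos s ^ S (S n)).
Proof.
  intros Hx Hs. pose proof PI_RGT_0.
  pose proof (one_sub_cos_le (x * s) ltac:(nra)) as Hcos.
  pose proof (mul_cos_le_sin s Hs) as Hsin.
  assert (Hc : 0 <= cos s) by (apply cos_ge_0; lra).
  assert (Hsc : (s * cos s) ^ 2 <= 1 - cos s ^ 2).
  { rewrite <- (sin2_cos2 s), !Rsqr_pow2, Rplus_minus_r.
    apply pow_incr. split; [apply Rmult_le_pos |]; lra. }
  assert (Hcn : 0 <= cos s ^ n) by now apply pow_le.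
  replace (cos s ^ S (S n)) with (cos s ^ 2 * cos s ^ n) by (simpl; ring).
  set (c := cos s) in *. set (cn := c ^ n) in *. clearbody cn c.
  apply (Rle_trans _ (c ^ 2 * cn * ((x * s) ^ 2 / 2))).
  - apply Rmult_le_compat_l; [| lra]. apply Rmult_le_pos; [apply pow2_ge_0 | lra].
  - replace (c ^ 2 * cn * ((x * s) ^ 2 / 2)) with (x ^ 2 / 2 * cn * (s * c) ^ 2) by (unfold Rdiv; ring).
    replace (x ^ 2 / 2 * (cn - c ^ 2 * cn)) with (x ^ 2 / 2 * cn * (1 - c ^ 2)) by ring.
    apply Rmult_le_compat_l; [| lra]. apply Rmult_le_pos; [| lra].
    apply Rmult_le_pos; [apply pow2_ge_0 | lra].
Qed.

Lemma wallis_cos_gap (n : nat) (x : R) : 0 <= x <= 1 ->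
  wallis_cos (S (S n)) 0 - wallis_cos (S (S n)) x
  <= x ^ 2 / 2 * (wallis_cos n 0 - wallis_cos (S (S n)) 0).
Proof.
  intros Hx. pose proof PI_RGT_0. unfold wallis_cos.
  set (W := fun m y => RInt (fun s => cos (y * s) * cos s ^ m) 0 (PI / 2)).
  change (W (S (S n)) 0 - W (S (S n)) x <= x ^ 2 / 2 * (W n 0 - W (S (S n)) 0)).
  replace (W (S (S n)) 0 - W (S (S n)) x) with (1 * W (S (S n)) 0 + (-1) * W (S (S n)) x) by ring.
  replace (x ^ 2 / 2 * (W n 0 - W (S (S n)) 0))
    with (x ^ 2 / 2 * W n 0 + (- (x ^ 2 / 2)) * W (S (S n)) 0) by ring.
  unfold W. rewrite <- !RInt_lincomb by apply ex_RInt_wallis_cos.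
  apply RInt_le; [lra | apply ex_RInt_of_derivable; intros; auto_derive; auto .. |].
  intros s Hs. rewrite !Rmult_0_l, cos_0, !Rmult_1_l.
  pose proof (wallis_cos_gap_integrand n x s Hx ltac:(lra)). nra.
Qed.

Fixpoint cos_prod (k : nat) (x : R) : R :=
  match k with
  | O => 1 - x ^ 2
  | S j => cos_prod j x * (1 - (x / INR (2 * k + 1)) ^ 2)
  end.

Lemma cos_prod_S (k : nat) (x : R) :
  cos_prod (S k) x = cos_prod k x * (1 - (x / INR (2 * S k + 1)) ^ 2).
Proof. reflexivity. Qed.

Lemma cos_prod_pos (k : nat) (x : R) : 0 <= x < 1 -> 0 < cos_prod k x.
Proof.
  intros Hx. induction k as [|k IH]; [simpl; nra |].
  rewrite cos_prod_S. apply Rmult_lt_0_compat; [exact IH |].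
  assert (HN : 1 <= INR (2 * S k + 1)) by (rewrite INR_odd; pose proof (pos_INR (S k)); lra).
  assert (0 <= x / INR (2 * S k + 1) < 1).
  { split; [apply Rdiv_le_0_compat | apply Rlt_div_l]; lra. }
  nra.
Qed.

Lemma cos_prod_wallis (k : nat) (x : R) :
  cos_prod k x * wallis_cos (2 * k + 1) x = cos (x * (PI / 2)) * wallis_cos (2 * k + 1) 0.
Proof.
  induction k as [|k IH].
  - change ((1 - x ^ 2) * wallis_cos 1 x = cos (x * (PI / 2)) * wallis_cos 1 0).
    rewrite wallis_cos_1_0, Rmult_1_r. apply wallis_cos_1.
  - rewrite cos_prod_S.
    replace (2 * S k + 1)%nat with (S (S (2 * k + 1))) by lia.
    pose proof (wallis_cos_rec (2 * k + 1) x) as Rx.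
    pose proof (wallis_cos_rec (2 * k + 1) 0) as R0.
    rewrite S_INR, S_INR. set (m := INR (2 * k + 1)) in *.
    assert (Hm : 0 <= m) by apply pos_INR.
    apply (Rmult_eq_reg_l ((m + 2) ^ 2)); [| nra].
    transitivity (cos_prod k x * (((m + 2) ^ 2 - x ^ 2) * wallis_cos (S (S (2 * k + 1))) x)).
    { field. lra. }
    rewrite Rx.
    transitivity ((m + 2) * (m + 1) * (cos_prod k x * wallis_cos (2 * k + 1) x)); [ring |].
    rewrite IH.
    transitivity (cos (x * (PI / 2)) * ((m + 2) * (m + 1) * wallis_cos (2 * k + 1) 0)); [ring |].
    rewrite <- R0. ring.
Qed.

Lemma wallis_cos_odd_pos (k : nat) (x : R) : 0 <= x < 1 -> 0 < wallis_cos (2 * k + 1) x.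
Proof.
  intros Hx. pose proof (cos_prod_wallis k x) as E.
  pose proof (cos_prod_pos k x Hx). pose proof (wallis_cos_odd_pos_0 k).
  assert (0 < cos (x * (PI / 2))) by (pose proof PI_RGT_0; apply cos_gt_0; nra).
  assert (0 < cos (x * (PI / 2)) * wallis_cos (2 * k + 1) 0) by now apply Rmult_lt_0_compat.
  nra.
Qed.

Lemma ln_cos_prod (k : nat) (x : R) : 0 <= x < 1 ->
  ln (cos_prod k x) = sum_n (fun j => ln (1 - (x / INR (2 * j + 1)) ^ 2)) k.
Proof.
  intros Hx. induction k as [|k IH].
  - rewrite sum_O. simpl. f_equal. field.
  - rewrite sum_Sn, <- IH, cos_prod_S.
    pose proof (cos_prod_pos (S k) x Hx) as HS. rewrite cos_prod_S in HS.
    pose proof (cos_prod_pos k x Hx) as H0.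
    apply ln_mult; [exact H0 |].
    apply (Rmult_lt_reg_l (cos_prod k x)); [exact H0 | now rewrite Rmult_0_r].
Qed.

Lemma wallis_cos_odd_ratio_le (k : nat) (x : R) : 0 <= x < 1 ->
  wallis_cos (2 * S k + 1) 0 / wallis_cos (2 * S k + 1) x - 1 <= / INR (S k).
Proof.
  intros Hx.
  pose proof (wallis_cos_odd_pos (S k) x Hx) as HW1.
  pose proof (wallis_cos_odd_pos_0 (S k)) as HW0.
  pose proof (wallis_cos_gap (2 * k + 1) x ltac:(lra)) as Hgap.
  rewrite wallis_cos_0_sub, INR_odd in Hgap.
  replace (S (S (2 * k + 1))) with (2 * S k + 1)%nat in Hgap by lia.
  set (W0 := wallis_cos (2 * S k + 1) 0) in *. set (W1 := wallis_cos (2 * S k + 1) x) in *.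
  assert (Hk : 1 <= INR (S k)) by (rewrite S_INR; pose proof (pos_INR k); lra).
  apply div_sub_one_le; [lra | split |].
  - apply Rinv_0_lt_compat. lra.
  - rewrite <- Rinv_1. apply Rinv_le_contravar; lra.
  - eapply Rle_trans; [exact Hgap |]. rewrite S_INR.
    replace (2 * INR k + 1 + 1) with (2 * (INR k + 1)) by ring.
    assert (x ^ 2 <= 1) by nra. pose proof (pos_INR k).
    unfold Rdiv. rewrite Rinv_mult.
    assert (0 < W0 * / (INR k + 1)) by (apply Rmult_lt_0_compat; [| apply Rinv_0_lt_compat]; lra).
    nra.
Qed.

Lemma ln_cos_prod_bounds (k : nat) (x : R) : 0 <= x < 1 ->
  ln (cos (x * (PI / 2))) <= ln (cos_prod (S k) x) <= ln (cos (x * (PI / 2))) + / INR (S k).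
Proof.
  intros Hx.
  pose proof (cos_prod_wallis (S k) x) as Hprod.
  pose proof (wallis_cos_odd_pos (S k) x Hx) as HW1.
  pose proof (wallis_cos_le_0 (2 * S k + 1) x) as Hle.
  pose proof (wallis_cos_odd_ratio_le k x Hx) as Hratio.
  assert (Hc : 0 < cos (x * (PI / 2))) by (pose proof PI_RGT_0; apply cos_gt_0; nra).
  set (W0 := wallis_cos (2 * S k + 1) 0) in *. set (W1 := wallis_cos (2 * S k + 1) x) in *.
  set (c := cos (x * (PI / 2))) in *.
  assert (Hcp : cos_prod (S k) x = c * (W0 / W1)) by (field_simplify; [rewrite <- Hprod; field |]; lra).
  assert (H1 : 1 <= W0 / W1) by (apply Rle_div_r; lra).
  rewrite Hcp, ln_mult by (try apply Rdiv_lt_0_compat; lra).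
  assert (0 <= ln (W0 / W1)) by (rewrite <- ln_1; apply ln_le; lra).
  assert (ln (W0 / W1) <= W0 / W1 - 1) by (apply ln_le_sub_1; lra).
  lra.
Qed.

(** * Termwise integration of the expansion of ln cos *)

Definition ln_cos_partial (k : nat) (t : R) : R :=
  sum_n (fun j => ln (1 - (t / (INR (2 * j + 1) * PI)) ^ 2)) k.

Lemma ln_cos_partial_bounds (k : nat) (t : R) : 0 <= t < PI ->
  ln (cos (t / 2)) <= ln_cos_partial (S k) t <= ln (cos (t / 2)) + / INR (S k).
Proof.
  intros Ht. pose proof PI_RGT_0.
  assert (Hx : 0 <= t / PI < 1) by (split; [apply Rdiv_le_0_compat | apply Rlt_div_l]; lra).
  replace (ln_cos_partial (S k) t) with (ln (cos_prod (S k) (t / PI))).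
  - replace (t / 2) with (t / PI * (PI / 2)) by (field; lra).
    now apply ln_cos_prod_bounds.
  - rewrite ln_cos_prod by exact Hx. apply sum_n_ext. intros j.
    do 3 f_equal. field. split; [lra |]. rewrite INR_odd. pose proof (pos_INR j). lra.
Qed.

Lemma ln_cos_partial_lim (t : R) : 0 <= t < PI ->
  is_lim_seq (fun k => ln_cos_partial k t) (ln (cos (t / 2))).
Proof.
  intros Ht. apply (is_lim_seq_squeeze_inv _ _ 1). intros k.
  rewrite Rdiv_1_l. now apply ln_cos_partial_bounds.
Qed.

Definition logC_term (r : nat) (x : R) (m : nat) : R :=
  (INR (2 * m + 1) / 2) ^ (r - 1) *
    (LogP r (2 * x / INR (2 * m + 1)) + (-1) ^ (r - 1) * LogP r (- (2 * x) / INR (2 * m + 1))).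

Lemma logC_Series (r : nat) (x : R) : logC r x = Series (logC_term r x).
Proof. reflexivity. Qed.

Lemma PI_le_odd_mul_PI (j : nat) : PI <= INR (2 * j + 1) * PI.
Proof. pose proof PI_RGT_0. rewrite INR_odd. pose proof (pos_INR j). nra. Qed.

Lemma ln_sq_prim_logC_term (p j : nat) (X : R) :
  (INR (2 * j + 1) * PI) ^ S p * ln_sq_prim p (X / (INR (2 * j + 1) * PI))
  = X ^ S p / INR (S p) * ln (1 - (X / (INR (2 * j + 1) * PI)) ^ 2)
    - (2 * PI) ^ S p / INR (S p) * logC_term (S (S p)) (X / (2 * PI)) j.
Proof.
  pose proof PI_RGT_0.
  assert (Hn : 0 < INR (2 * j + 1)) by (rewrite INR_odd; pose proof (pos_INR j); lra).
  assert (HSp : INR (S p) <> 0) by (apply not_0_INR; lia).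
  unfold ln_sq_prim, logC_term. change (S (S p) - 1)%nat with (S p).
  set (n := INR (2 * j + 1)) in *. clearbody n.
  set (u := X / (n * PI)).
  replace (2 * (X / (2 * PI)) / n) with u by (unfold u; field; lra).
  replace (- (2 * (X / (2 * PI))) / n) with (- u) by (unfold u; field; lra).
  replace (X ^ S p) with ((n * PI) ^ S p * u ^ S p)
    by (unfold u; rewrite <- Rpow_mult_distr; f_equal; field; lra).
  replace ((n * PI) ^ S p) with ((2 * PI) ^ S p * (n / 2) ^ S p)
    by (rewrite <- Rpow_mult_distr; f_equal; field).
  field. exact HSp.
Qed.

Lemma is_RInt_pow_ln_cos_partial (p k : nat) (X : R) : 0 <= X < PI ->
  is_RInt (fun t => t ^ p * ln_cos_partial k t) 0 X
    (X ^ S p / INR (S p) * ln_cos_partial k X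
     - (2 * PI) ^ S p / INR (S p) * sum_n (logC_term (S (S p)) (X / (2 * PI))) k).
Proof.
  intros HX.
  apply (is_RInt_ext (fun t => sum_n (fun j => t ^ p * ln (1 - (t / (INR (2 * j + 1) * PI)) ^ 2)) k)).
  { intros t _. exact (@sum_n_mult_l R_Ring (t ^ p) _ k). }
  replace (X ^ S p / INR (S p) * ln_cos_partial k X
           - (2 * PI) ^ S p / INR (S p) * sum_n (logC_term (S (S p)) (X / (2 * PI))) k)
    with (sum_n (fun j => (INR (2 * j + 1) * PI) ^ S p
                          * ln_sq_prim p (X / (INR (2 * j + 1) * PI))) k).
  - apply is_RInt_sum_n. intros j.
    pose proof (PI_le_odd_mul_PI j). apply is_RInt_pow_ln_sq; lra.
  - unfold ln_cos_partial. induction k as [|k IH].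
    + rewrite !sum_O. apply ln_sq_prim_logC_term.
    + rewrite !sum_Sn, IH, ln_sq_prim_logC_term. unfold plus; simpl. ring.
Qed.

Lemma RInt_pow_ln_cos_partial_lim (p : nat) (X : R) : 0 <= X < PI ->
  is_lim_seq (fun k => RInt (fun t => t ^ p * ln_cos_partial k t) 0 X)
    (RInt (fun t => t ^ p * ln (cos (t / 2))) 0 X).
Proof.
  intros HX. pose proof PI_RGT_0.
  apply (is_lim_seq_RInt_squeeze _ (fun t => t ^ p)); [lra | | | |].
  - apply ex_RInt_of_derivable. intros z Hz.
    rewrite Rmin_left, Rmax_right in Hz by lra. auto_derive. apply cos_gt_0; lra.
  - apply ex_RInt_of_derivable. intros. auto_derive. auto.
  - intros k. eexists. now apply is_RInt_pow_ln_cos_partial.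
  - intros k t Ht. pose proof (ln_cos_partial_bounds k t ltac:(lra)).
    assert (0 <= t ^ p) by (apply pow_le; lra).
    assert (0 <= / INR (S k)) by (apply Rlt_le, Rinv_0_lt_compat, lt_0_INR; lia).
    unfold Rdiv. split; nra.
Qed.

Theorem theorem2p1 (r : nat) (x : R) :
  (2 <= r)%nat -> 0 <= x < PI ->
  RInt (fun t => t ^ (r - 2) * ln (cos (t / 2))) 0 x =
    x ^ (r - 1) / INR (r - 1) * ln (cos (x / 2))
    - (2 * PI) ^ (r - 1) / INR (r - 1) * logC r (x / (2 * PI)).
Proof.
  intros Hr Hx. destruct r as [|[|p]]; [lia | lia |].
  replace (S (S p) - 2)%nat with p by lia. replace (S (S p) - 1)%nat with (S p) by lia.
  pose proof PI_RGT_0.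
  assert (HSp : 0 < INR (S p)) by (apply lt_0_INR; lia).
  assert (Hc : 0 < (2 * PI) ^ S p / INR (S p)) by (apply Rdiv_lt_0_compat; [apply pow_lt |]; lra).
  set (c := (2 * PI) ^ S p / INR (S p)) in *.
  set (J := RInt (fun t => t ^ p * ln (cos (t / 2))) 0 x : R).
  assert (Hser : is_lim_seq (sum_n (logC_term (S (S p)) (x / (2 * PI))))
                   ((x ^ S p / INR (S p) * ln (cos (x / 2)) - J) / c)).
  { apply (is_lim_seq_ext (fun k => (x ^ S p / INR (S p) * ln_cos_partial k x
                                      - RInt (fun t => t ^ p * ln_cos_partial k t) 0 x) / c)).
    - intros k. rewrite (is_RInt_unique _ _ _ _ (is_RInt_pow_ln_cos_partial p k x Hx)).
      fold c. field. split; lra.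
    - apply (is_lim_seq_scal_r _ (/ c) (x ^ S p / INR (S p) * ln (cos (x / 2)) - J)).
      apply is_lim_seq_minus'.
      + apply (is_lim_seq_scal_l _ _ (ln (cos (x / 2)))), ln_cos_partial_lim, Hx.
      + apply RInt_pow_ln_cos_partial_lim, Hx. }
  rewrite logC_Series, (is_series_unique _ _ Hser). fold J. apply Rminus_diag_uniq. field. lra.
Qed.
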